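(* Let $\mathcal{G}\subseteq C(\mathbb{R},\mathbb{R})$ be nonempty. The following conditions are equivalent: (1) $\{\mathrm{CL}(\mathbb{R})\cap\mathcal{P}(X):X\subseteq\mathbb{R}\}\subseteq\mathcal{K}_\mathcal{G}$; (2) $\{\mathcal{A}_x:x\in\mathbb{R}\}\subseteq\mathcal{K}_\mathcal{G}$, where $\mathcal{A}_x=\{E\in\mathrm{CL}(\mathbb{R}):x\notin E\}$; (3) for every $x\in\mathbb{R}$ there exists $f\in C(\mathbb{R},\mathbb{R})$ such that $E_\mathcal{G}(\{f\})=\mathcal{A}_x$.
   Context: $\mathrm{CL}(\mathbb{R})$ is the family of closed subsets of $\mathbb{R}$ and $\mathcal{P}(X)$ the power set of $X$. For $\mathcal{G}\subseteq C(\mathbb{R},\mathbb{R})$ let $R_\mathcal{G}=\{(f,E)\in C(\mathbb{R},\mathbb{R})\times\mathrm{CL}(\mathbb{R}):(\exists g\in\mathcal{G})\, f\restriction E=g\restriction E\}$; for $\mathcal{F}\subseteq C(\mathbb{R},\mathbb{R})$ put $E_\mathcal{G}(\mathcal{F})=\{E\in\mathrm{CL}(\mathbb{R}):(\forall f\in\mathcal{F})\,(f,E)\in R_\mathcal{G}\}$, and let $\mathcal{K}_\mathcal{G}=\{E_\mathcal{G}(\mathcal{F}):\mathcal{F}\subseteq C(\mathbb{R},\mathbb{R})\}$. *)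

From Stdlib Require Import Reals.
Open Scope R_scope.

(* C(R,R) is represented by functions R -> R together with [continuity f];
   subsets of C(R,R) are predicates [(R -> R) -> Prop] all of whose members
   are continuous.  Families of closed sets are predicates on
   [R -> Prop]; membership of E in a family is only consulted for closed E. *)

Definition CRR (f : R -> R) : Prop := continuity f.

Definition CL (E : R -> Prop) : Prop := closed_set E.

Definition restr_eq (f g : R -> R) (E : R -> Prop) : Prop :=
  forall x, E x -> f x = g x.

Definition R_G (G : (R -> R) -> Prop) (f : R -> R) (E : R -> Prop) : Prop :=
  CRR f /\ CL E /\ exists g, G g /\ restr_eq f g E.

Definition E_G (G F : (R -> R) -> Prop) (E : R -> Prop) : Prop :=
  CL E /\ forall f, F f -> R_G G f E.

Definition fam_eq (A B : (R -> Prop) -> Prop) : Prop :=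
  forall E, CL E -> (A E <-> B E).

Definition in_K_G (G : (R -> R) -> Prop) (A : (R -> Prop) -> Prop) : Prop :=
  exists F : (R -> R) -> Prop,
    (forall f, F f -> CRR f) /\ fam_eq A (E_G G F).

Definition CL_sub (X : R -> Prop) (E : R -> Prop) : Prop :=
  CL E /\ forall y, E y -> X y.

Definition A_ (x : R) (E : R -> Prop) : Prop := CL E /\ ~ E x.

Definition single (f : R -> R) (h : R -> R) : Prop := h = f.

(* K_G is closed under arbitrary intersections: the intersection of the
   E_G(F_i) is E_G of the union of the F_i.  Since CL(R) ∩ P(X) is the
   intersection of the A_x with x ∉ X, and A_x = CL(R) ∩ P(R \ {x}), this
   gives (1) <-> (2).  For (2) -> (3), write A_x = E_G(F).  As {x} ∉ A_x, some
   f ∈ F agrees with no g ∈ G at x; then E_G({f}) ⊇ E_G(F) = A_x, and E_G({f})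
   contains no closed set through x, since agreement on such a set restricts
   to agreement at x. *)

From Stdlib Require Import Reals Classical Lra.
Open Scope R_scope.

Lemma CL_singleton (x : R) : CL (fun y => y = x).
Proof.
  unfold CL, closed_set, open_set, complementary, neighbourhood.
  intros y Hyx.
  assert (Hpos : 0 < Rabs (y - x)).
  { apply Rabs_pos_lt. intro H; apply Hyx; lra. }
  exists (mkposreal _ Hpos). intros z Hz Hzx. unfold disc in Hz. simpl in Hz.
  subst z. rewrite Rabs_minus_sym in Hz. lra.
Qed.

Lemma R_G_restrict (G : (R -> R) -> Prop) (f : R -> R) (E E' : R -> Prop) :
  CL E' -> (forall y, E' y -> E y) -> R_G G f E -> R_G G f E'.
Proof.
  intros HE' Hsub [Hf [_ [g [Hg Hfg]]]].
  split; [exact Hf|]. split; [exact HE'|].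
  exists g. split; [exact Hg|]. intros y Hy. apply Hfg, Hsub, Hy.
Qed.

Lemma E_G_antitone (G F F' : (R -> R) -> Prop) (E : R -> Prop) :
  (forall f, F' f -> F f) -> E_G G F E -> E_G G F' E.
Proof.
  intros Hsub [HE HR]. split; [exact HE|]. intros f Hf. apply HR, Hsub, Hf.
Qed.

Lemma in_K_G_fam_eq (G : (R -> R) -> Prop) (A B : (R -> Prop) -> Prop) :
  fam_eq A B -> in_K_G G A -> in_K_G G B.
Proof.
  intros HAB [F [HF HA]]. exists F. split; [exact HF|].
  intros E HE. rewrite <- (HA E HE). symmetry. apply HAB, HE.
Qed.

Lemma in_K_G_E_G (G F : (R -> R) -> Prop) :
  (forall f, F f -> CRR f) -> in_K_G G (E_G G F).
Proof.
  intros HF. exists F. split; [exact HF|]. intros E _. reflexivity.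
Qed.

Lemma in_K_G_bigcap (G : (R -> R) -> Prop) (I : Type) (P : I -> Prop)
  (A : I -> (R -> Prop) -> Prop) :
  (forall i, P i -> in_K_G G (A i)) ->
  in_K_G G (fun E => CL E /\ forall i, P i -> A i E).
Proof.
  intros HA.
  set (generates i F := (forall f, F f -> CRR f) /\ fam_eq (A i) (E_G G F)).
  exists (fun f => exists i F, P i /\ generates i F /\ F f). split.
  - intros f [i [F [_ [[HF _] Hf]]]]. apply HF, Hf.
  - intros E HE. split.
    + intros [_ HAE]. split; [exact HE|].
      intros f [i [F [Hi [[_ HAF] Hf]]]].
      apply (proj1 (HAF E HE) (HAE i Hi)), Hf.
    + intros HEG. split; [exact HE|]. intros i Hi.
      destruct (HA i Hi) as [F HgenF].
      apply (proj2 (proj2 HgenF E HE)).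
      eapply E_G_antitone; [|exact HEG].
      intros f Hf. exists i, F. auto.
Qed.

Lemma CL_sub_eq_bigcap_A_ (X : R -> Prop) :
  fam_eq (fun E => CL E /\ forall x, ~ X x -> A_ x E) (CL_sub X).
Proof.
  intros E HE. split.
  - intros [_ HA]. split; [exact HE|]. intros y Ey.
    apply NNPP. intro HnX. apply (proj2 (HA y HnX)), Ey.
  - intros [_ HX]. split; [exact HE|]. intros x HnX.
    split; [exact HE|]. intro Ex. apply HnX, HX, Ex.
Qed.

Lemma CL_sub_compl_eq_A_ (x : R) : fam_eq (CL_sub (fun y => y <> x)) (A_ x).
Proof.
  intros E HE. split.
  - intros [_ Hsub]. split; [exact HE|]. intro Ex. apply (Hsub x Ex), eq_refl.
  - intros [_ Hnx]. split; [exact HE|]. intros y Ey Hyx. subst y. auto.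
Qed.

Lemma E_G_single_eq_A_ (G : (R -> R) -> Prop) (f : R -> R) (x : R) :
  ~ R_G G f (fun y => y = x) ->
  (forall E, A_ x E -> E_G G (single f) E) ->
  fam_eq (E_G G (single f)) (A_ x).
Proof.
  intros Hnfx HA E HE. split.
  - intros [_ HR]. split; [exact HE|]. intro Ex.
    apply Hnfx, (R_G_restrict G f E); [apply CL_singleton| |apply HR, eq_refl].
    intros y Hy. subst y. exact Ex.
  - apply HA.
Qed.

Lemma in_K_G_A_single (G : (R -> R) -> Prop) (x : R) :
  in_K_G G (A_ x) -> exists f, CRR f /\ fam_eq (E_G G (single f)) (A_ x).
Proof.
  intros [F [HF HAF]].
  assert (Hbad : exists f, F f /\ ~ R_G G f (fun y => y = x)).
  { apply NNPP. intro Hall.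
    assert (HEx : E_G G F (fun y => y = x)).
    { split; [apply CL_singleton|]. intros f Hf.
      apply NNPP. intro Hnfx. apply Hall. exists f. auto. }
    apply (proj2 (HAF _ (CL_singleton x))) in HEx.
    apply (proj2 HEx), eq_refl. }
  destruct Hbad as [f [Hf Hnfx]].
  exists f. split; [apply HF, Hf|].
  apply E_G_single_eq_A_; [exact Hnfx|].
  intros E HA. apply (E_G_antitone G F); [|apply (HAF E (proj1 HA)), HA].
  intros h Hh. unfold single in Hh. subst h. exact Hf.
Qed.

Theorem theorem4p2 (G : (R -> R) -> Prop)
  (HGC : forall g, G g -> CRR g)
  (HGne : exists g, G g) :
  ((forall X : R -> Prop, in_K_G G (CL_sub X)) <->
   (forall x : R, in_K_G G (A_ x))) /\
  ((forall x : R, in_K_G G (A_ x)) <->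
   (forall x : R, exists f, CRR f /\ fam_eq (E_G G (single f)) (A_ x))).
Proof.
  split; split.
  - intros HCL x. apply (in_K_G_fam_eq G _ _ (CL_sub_compl_eq_A_ x)), HCL.
  - intros HA X. apply (in_K_G_fam_eq G _ _ (CL_sub_eq_bigcap_A_ X)).
    apply in_K_G_bigcap. intros x _. apply HA.
  - intros HA x. apply in_K_G_A_single, HA.
  - intros Hsingle x. destruct (Hsingle x) as [f [Hf Heq]].
    apply (in_K_G_fam_eq G (E_G G (single f))); [exact Heq|].
    apply in_K_G_E_G. intros h Hh. unfold single in Hh. subst h. exact Hf.
Qed.
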